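(* Let $n,m\in\mathbb{N}_0$. Then $L_n^{(m)}(2+\sqrt2)=0$, or $L_n^{(m)}(2-\sqrt2)=0$, if and only if $n=2$ and $m=0$.
   Context: Generalized Laguerre polynomials: $L_n^{(\alpha)}(x)=\sum_{j=0}^n(-1)^j\binom{n+\alpha}{n-j}\frac{x^j}{j!}$. *)

From mathcomp Require Import all_boot all_order all_algebra.
From mathcomp Require Import reals.
Set Implicit Arguments. Unset Strict Implicit. Unset Printing Implicit Defensive.
Import Order.TTheory GRing.Theory Num.Theory.
Local Open Scope ring_scope.

Definition laguerre {R : realType} (n m : nat) (x : R) : R :=
  \sum_(j < n.+1) (-1) ^+ j * ('C(n + m, n - j))%:R * x ^+ j / (j`!)%:R.

From mathcomp Require Import all_boot all_order all_algebra.
From mathcomp Require Import reals.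
From mathcomp Require Import ring zify.
Set Implicit Arguments. Unset Strict Implicit. Unset Printing Implicit Defensive.
Import Order.TTheory GRing.Theory Num.Theory.
Local Open Scope ring_scope.

(* Clearing denominators, n! L_n^(m)(x) = sum_j (-1)^j C(n, j) (n+m)^_(n-j) x^j:
   the top coefficient is 1, the next one is n (n+m), and all the others are
   divisible by (n+m)(n+m-1), hence by an odd p > 1 as soon as n + m > 2.
   If x = 2 + r with r^2 = 2 were a root (n >= 1), x^(n-1) (n (n+m) - x) would
   lie in p Z[r]; multiplying by the conjugate power (2 - r)^(n-1) turns it into
   2^(n-1) (n (n+m) - 2 - r), so p would divide 2^(n-1).  The remaining
   polynomials are 1, m + 1 - x and L_2^(0)(x) = (x^2 - 4x + 2) / 2, and only the
   last one vanishes at some 2 + r; r = sqrt 2 and r = -sqrt 2 give both points. *)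

Lemma sqrn_double_eq0 (a b : nat) : (a ^ 2 = 2 * b ^ 2)%N -> b = 0%N.
Proof.
case: b => [//|b] eq_ab.
have a_gt0 : (0 < a)%N by case: a eq_ab => [|a] //=; rewrite expnS; lia.
have := congr1 (logn 2) eq_ab.
rewrite lognM ?expn_gt0 // !lognX (_ : logn 2 2 = 1%N) //; lia.
Qed.

Lemma sqrz_double_eq0 (a b : int) : a ^+ 2 = 2 * b ^+ 2 -> b = 0.
Proof.
move=> eq_ab; apply/eqP; rewrite -absz_eq0; apply/eqP/(@sqrn_double_eq0 (absz a)).
by rewrite -!abszX -[2%N]/(absz 2) -abszM eq_ab.
Qed.

Section IntegersAdjoinSqrt2.
Variables (R : numDomainType) (r : R).
Hypothesis r2 : r ^+ 2 = 2.

Lemma intr_sqrt2_coef_eq0 (a b : int) : a%:~R + b%:~R * r = 0 -> b = 0.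
Proof.
move=> /eqP; rewrite addr_eq0 => /eqP a_eq.
apply: (@sqrz_double_eq0 a); apply: (@intr_inj R).
by rewrite [in RHS]intrM !rmorphXn /= a_eq sqrrN exprMn r2 mulrC.
Qed.

Definition in_Zsqrt2 (z : R) : Prop := exists a b : int, z = a%:~R + b%:~R * r.

Lemma in_Zsqrt2_nat (k : nat) : in_Zsqrt2 k%:R.
Proof. by exists k, 0; rewrite mul0r addr0. Qed.

Lemma in_Zsqrt2N x : in_Zsqrt2 x -> in_Zsqrt2 (- x).
Proof. by move=> [a [b ->]]; exists (- a), (- b); rewrite !rmorphN /=; ring. Qed.

Lemma in_Zsqrt2D x y : in_Zsqrt2 x -> in_Zsqrt2 y -> in_Zsqrt2 (x + y).
Proof.
move=> [a [b ->]] [c [d ->]]; exists (a + c), (b + d).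
rewrite !rmorphD /=; ring.
Qed.

Lemma in_Zsqrt2M x y : in_Zsqrt2 x -> in_Zsqrt2 y -> in_Zsqrt2 (x * y).
Proof.
move=> [a [b ->]] [c [d ->]]; exists (a * c + 2 * b * d), (a * d + b * c).
rewrite !rmorphD !rmorphM /= -[2%:~R]r2; ring.
Qed.

Lemma in_Zsqrt2X x k : in_Zsqrt2 x -> in_Zsqrt2 (x ^+ k).
Proof.
move=> Zx; elim: k => [|k IHk]; first exact: (in_Zsqrt2_nat 1).
by rewrite exprS; apply: in_Zsqrt2M.
Qed.

Lemma in_Zsqrt2_dvdz (p a b : int) (y : R) :
  in_Zsqrt2 y -> a%:~R + b%:~R * r = p%:~R * y -> (p %| b)%Z.
Proof.
move=> [c [d ->]] eq_ab; apply/dvdzP; exists d; apply/eqP; rewrite -subr_eq0.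
apply/eqP/(@intr_sqrt2_coef_eq0 (a - c * p)).
rewrite !rmorphB !rmorphM /= -[RHS](subrr (a%:~R + b%:~R * r)) {2}eq_ab; ring.
Qed.

Lemma in_Zsqrt2_signed_sum_dvdn (p k : nat) (c : nat -> nat) (x : R) :
  in_Zsqrt2 x -> (forall j, (j < k)%N -> (p %| c j)%N) ->
  exists2 y, in_Zsqrt2 y & \sum_(j < k) (-1) ^+ j * (c j)%:R * x ^+ j = p%:R * y.
Proof.
move=> Zx dvd_c.
exists (\sum_(j < k) (-1) ^+ j * (c j %/ p)%:R * x ^+ j).
  apply: (big_ind in_Zsqrt2); [exact: (in_Zsqrt2_nat 0) | exact: in_Zsqrt2D |].
  move=> j _; apply: in_Zsqrt2M; last exact: in_Zsqrt2X.
  by apply/in_Zsqrt2M/in_Zsqrt2_nat/in_Zsqrt2X/in_Zsqrt2N/(in_Zsqrt2_nat 1).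
rewrite mulr_sumr; apply: eq_bigr => j _.
by rewrite -{1}(divnK (dvd_c j (ltn_ord j))) natrM; ring.
Qed.

Lemma conj_sqrt2_expr k : (2 - r) ^+ k * (2 + r) ^+ k = 2 ^+ k.
Proof. by rewrite -exprMn; congr (_ ^+ _); rewrite -subr_sqr r2; ring. Qed.

Lemma expr_mul_sub_neq_odd_mul (p k c : nat) (y : R) :
  odd p -> (1 < p)%N -> in_Zsqrt2 y ->
  (2 + r) ^+ k * (c%:R - (2 + r)) != p%:R * y.
Proof.
move=> odd_p p_gt1 Zy; apply/eqP => eq_py.
have Zy' : in_Zsqrt2 ((2 - r) ^+ k * y).
  by apply/in_Zsqrt2M/Zy/in_Zsqrt2X; exists 2, (-1); rewrite mulN1r.
have : (p%:Z %| - (2 ^+ k))%Z.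
  apply: (@in_Zsqrt2_dvdz _ (2 ^+ k * (c%:Z - 2)) _ _ Zy').
  rewrite mulrCA -eq_py mulrA conj_sqrt2_expr.
  by rewrite rmorphN rmorphM rmorphB /= !rmorphXn /=; ring.
rewrite dvdzE abszN abszX /= => dvd_p2k.
have : coprime p (2 ^ k) by rewrite coprimeXr ?coprimen2.
by rewrite /coprime (gcdn_idPl dvd_p2k) => /eqP p1; rewrite p1 in p_gt1.
Qed.

End IntegersAdjoinSqrt2.

Definition laguerre_coef (n m j : nat) : nat := ('C(n, j) * (n + m) ^_ (n - j))%N.

Lemma fact_mul_bin_laguerre_coef (n m j : nat) : (j <= n)%N ->
  (n`! * 'C(n + m, n - j) = laguerre_coef n m j * j`!)%N.
Proof.
move=> le_jn; apply/eqP; rewrite -(eqn_pmul2r (fact_gt0 (n - j))); apply/eqP.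
by rewrite -mulnA bin_ffact /laguerre_coef -(bin_fact le_jn); ring.
Qed.

Lemma fact_mul_laguerre (R : realType) (n m : nat) (x : R) :
  n`!%:R * laguerre n m x = \sum_(j < n.+1) (-1) ^+ j * (laguerre_coef n m j)%:R * x ^+ j.
Proof.
rewrite /laguerre mulr_sumr; apply: eq_bigr => j _.
have fact_neq0 : (j`!)%:R != 0 :> R by rewrite pnatr_eq0 -lt0n fact_gt0.
have scaled_coef : n`!%:R * 'C(n + m, n - j)%:R = (laguerre_coef n m j)%:R * j`!%:R :> R.
  by rewrite -!natrM fact_mul_bin_laguerre_coef // -ltnS.
apply: (mulIf fact_neq0); rewrite mulrCA !mulrA divfK //.
transitivity ((-1) ^+ j * x ^+ j * (n`!%:R * 'C(n + m, n - j)%:R)); first by ring.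
by rewrite scaled_coef; ring.
Qed.

Lemma laguerre_coef_diag (n m : nat) : laguerre_coef n m n = 1%N.
Proof. by rewrite /laguerre_coef binn subnn ffactn0. Qed.

Lemma dvdn_laguerre_coef (n m j : nat) : (j.+2 <= n)%N ->
  ((n + m) * (n + m).-1 %| laguerre_coef n m j)%N.
Proof.
move=> le_j2n; apply: dvdn_mull.
have -> : (n - j = (n - j).-2.+2)%N by lia.
by rewrite !ffactnS mulnA dvdn_mulr.
Qed.

Lemma odd_dvdn_mul_pred (N : nat) : (2 < N)%N ->
  exists p, [/\ odd p, (1 < p)%N & (p %| N * N.-1)%N].
Proof.
move=> N_gt2; case: (boolP (odd N)) => [odd_N | even_N].
  by exists N; split; rewrite ?dvdn_mulr //; lia.
exists N.-1; split; rewrite ?dvdn_mull //; first by case: N N_gt2 even_N => [|N] //= _ /negPn.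
lia.
Qed.

Lemma laguerre_2addr_eq0 (R : realType) (r : R) (n m : nat) :
  r ^+ 2 = 2 -> laguerre n m (2 + r) = 0 -> n = 2%N /\ m = 0%N.
Proof.
move=> r2 L0; set x := 2 + r.
have := fact_mul_laguerre n m x; rewrite L0 mulr0 => /esym; clear L0.
case: n => [|k]; first by rewrite big_ord1 laguerre_coef_diag !expr0 !mul1r => /eqP; rewrite oner_eq0.
have [[-> ->] // | [-> | gt_N2]] : (k = 1 /\ m = 0 \/ k = 0 \/ 2 < k.+1 + m)%N by lia.
  rewrite !big_ord_recr big_ord0 /= laguerre_coef_diag => sum0.
  have /(intr_sqrt2_coef_eq0 r2) // : ((laguerre_coef 1 m 0)%:Z - 2)%:~R + (-1)%:~R * r = 0 :> R.
  by rewrite -[RHS]sum0 rmorphB /= -pmulrn /x; ring.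
rewrite !big_ord_recr /= laguerre_coef_diag mulr1.
set b := laguerre_coef k.+1 m k; set low := \sum_(i < k) _.
move=> /eqP; rewrite -addrA addr_eq0 => /eqP low_eq.
have [p [odd_p p_gt1 p_dvd]] := odd_dvdn_mul_pred gt_N2.
have [y Zy low_py] : exists2 y, in_Zsqrt2 r y & low = p%:R * y.
  apply: (in_Zsqrt2_signed_sum_dvdn r2); first by exists 2, 1; rewrite mul1r.
  by move=> j lt_jk; apply: dvdn_trans p_dvd (@dvdn_laguerre_coef k.+1 m j lt_jk).
have Zsign_y : in_Zsqrt2 r ((-1) ^+ k.+1 * y).
  by apply/(in_Zsqrt2M r2)/Zy/in_Zsqrt2X/in_Zsqrt2N/(in_Zsqrt2_nat r 1).
have sign_sq : (-1) ^+ k * (-1) ^+ k = 1 :> R by rewrite -exprMn mulrNN mulr1 expr1n.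
have top : x ^+ k * (b%:R - x) = p%:R * ((-1) ^+ k.+1 * y).
  by rewrite mulrCA -low_py low_eq !exprS -[LHS]mul1r -{1}sign_sq; ring.
by have := expr_mul_sub_neq_odd_mul r2 k b odd_p p_gt1 Zsign_y; rewrite top eqxx.
Qed.

Lemma laguerre_2_0 (R : realType) (x : R) : laguerre 2 0 x = (x ^+ 2 - 4 * x + 2) / 2.
Proof.
rewrite /laguerre !big_ord_recr big_ord0 /=.
rewrite (_ : 'C(2 + 0, 2 - 0) = 1%N) // (_ : 'C(2 + 0, 2 - 1) = 2%N) //.
rewrite (_ : 'C(2 + 0, 2 - 2) = 1%N) // (_ : 0`! = 1%N) // (_ : 1`! = 1%N) // (_ : 2`! = 2%N) //.
by field.
Qed.

Theorem proposition3 (R : realType) (n m : nat) :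
  (laguerre n m (2 + Num.sqrt (2 : R)) = 0 \/ laguerre n m (2 - Num.sqrt (2 : R)) = 0)
  <-> (n = 2%N /\ m = 0%N).
Proof.
have sqrt2_sq : Num.sqrt (2 : R) ^+ 2 = 2 by rewrite sqr_sqrtr // ler0n.
have opp_sqrt2_sq : (- Num.sqrt (2 : R)) ^+ 2 = 2 by rewrite sqrrN.
split.
  by case; [exact: (laguerre_2addr_eq0 sqrt2_sq) | exact: (laguerre_2addr_eq0 opp_sqrt2_sq)].
move=> [-> ->]; left; rewrite laguerre_2_0.
have -> : (2 + Num.sqrt 2) ^+ 2 - 4 * (2 + Num.sqrt 2) + 2 = 0 :> R.
  by rewrite sqrrD sqrt2_sq; ring.
by rewrite mul0r.
Qed.
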